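(* Let $K\geq 1$ and let $r_{ij}\geq 0$, $i,j\in\{1,2,3,4\}$, be real numbers such that $r_{ij}=r_{ji}$ and $r_{ij}\leq K(r_{ik}+r_{jk})$ for all $i,j,k\in\{1,2,3,4\}$. Then $$\sqrt{r_{12}r_{34}}\leq K\big(\sqrt{r_{13}r_{24}}+\sqrt{r_{14}r_{23}}\big).$$ In particular, $$r_{12}r_{34}\leq 2K^2(r_{13}r_{24}+r_{14}r_{23})\leq (2K)^2\max\{r_{13}r_{24},\ r_{14}r_{23}\}.$$ *)

From Stdlib Require Import Reals.
Open Scope R_scope.

Definition idx4 (i : nat) : Prop := (1 <= i <= 4)%nat.

(** Put [a = r12], [b = r34], [c = r13], [d = r24], [e = r14], [f = r23].
    The quasi-triangle inequality bounds [a / K] by both [c + f] and [d + e],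
    and [b / K] by both [c + e] and [d + f].  It therefore suffices to show
    that the product of the two minima is at most [(sqrt (c d) + sqrt (e f))^2].
    Up to the symmetries of this expression both minima may be taken to be
    [c + f] and [c + e] with [e <= f]; then [c <= d], [c e <= d f], and
    [(c + f)(c + e) <= c d + e f + 2 c e <= c d + e f + 2 sqrt (c d e f)]. *)

From Stdlib Require Import Reals Lra Lia Psatz.
Open Scope R_scope.

Lemma le_sqrt_mul (x y : R) : 0 <= x -> x <= y -> x <= sqrt (x * y).
Proof.
  intros hx hxy.
  rewrite <- (sqrt_square x) at 1 by exact hx.
  apply sqrt_le_1_alt, Rmult_le_compat_l; assumption.
Qed.

Lemma sqr_sqrt_plus_le (x y : R) :
  0 <= x -> 0 <= y -> (sqrt x + sqrt y) ^ 2 <= 2 * (x + y).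
Proof.
  intros hx hy.
  pose proof (sqrt_sqrt x hx); pose proof (sqrt_sqrt y hy).
  pose proof (pow2_ge_0 (sqrt x - sqrt y)).
  nra.
Qed.

Lemma Rplus_le_2_Rmax (x y : R) : x + y <= 2 * Rmax x y.
Proof. pose proof (Rmax_l x y); pose proof (Rmax_r x y); lra. Qed.

Lemma sum_mul_sum_le_sqr_ordered (c d e f : R) :
  0 <= c -> 0 <= e -> e <= f -> c + f <= d + e ->
  (c + f) * (c + e) <= (sqrt (c * d) + sqrt (e * f)) ^ 2.
Proof.
  intros hc he hef hsum.
  assert (hcd : c <= d) by lra.
  assert (hd : 0 <= d) by lra.
  assert (hf : 0 <= f) by lra.
  assert (hce : c * e <= d * f) by (apply Rmult_le_compat; assumption).
  assert (hcross : sqrt (c * d) * sqrt (e * f) = sqrt ((c * e) * (d * f))).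
  { rewrite <- sqrt_mult by (apply Rmult_le_pos; assumption).
    f_equal; ring. }
  assert (hmid : c * e <= sqrt (c * d) * sqrt (e * f)).
  { rewrite hcross; apply le_sqrt_mul; [apply Rmult_le_pos |]; assumption. }
  pose proof (sqrt_sqrt (c * d) ltac:(apply Rmult_le_pos; assumption)).
  pose proof (sqrt_sqrt (e * f) ltac:(apply Rmult_le_pos; assumption)).
  assert (c * (c + f) <= c * (d + e)) by (apply Rmult_le_compat_l; assumption).
  nra.
Qed.

Lemma sum_mul_sum_le_sqr (c d e f : R) :
  0 <= c -> 0 <= e -> 0 <= f -> c + f <= d + e -> c + e <= d + f ->
  (c + f) * (c + e) <= (sqrt (c * d) + sqrt (e * f)) ^ 2.
Proof.
  intros hc he hf h1 h2.
  destruct (Rle_dec e f) as [hef | hfe].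
  - exact (sum_mul_sum_le_sqr_ordered c d e f hc he hef h1).
  - pose proof (sum_mul_sum_le_sqr_ordered c d f e hc hf ltac:(lra) h2) as H.
    rewrite (Rmult_comm f e) in H; lra.
Qed.

Lemma Rmin_mul_Rmin_le (c d e f : R) :
  0 <= c -> 0 <= d -> 0 <= e -> 0 <= f ->
  Rmin (c + f) (d + e) * Rmin (c + e) (d + f)
    <= (sqrt (c * d) + sqrt (e * f)) ^ 2.
Proof.
  intros hc hd he hf.
  (* Each case is the first after a permutation of [c, d, e, f] fixing the pair {c d, e f}. *)
  unfold Rmin; destruct (Rle_dec (c + f) (d + e)), (Rle_dec (c + e) (d + f)).
  - apply sum_mul_sum_le_sqr; assumption.
  - pose proof (sum_mul_sum_le_sqr f e d c) as H.
    rewrite (Rmult_comm f e), (Rmult_comm d c) in H; lra.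
  - pose proof (sum_mul_sum_le_sqr e f c d) as H; lra.
  - pose proof (sum_mul_sum_le_sqr d c f e) as H.
    rewrite (Rmult_comm f e), (Rmult_comm d c) in H; lra.
Qed.

Lemma sqrt_mul_le_quasi_ptolemy (K a b c d e f : R) :
  0 <= K -> 0 <= a -> 0 <= b -> 0 <= c -> 0 <= d -> 0 <= e -> 0 <= f ->
  a <= K * (c + f) -> a <= K * (d + e) ->
  b <= K * (c + e) -> b <= K * (d + f) ->
  sqrt (a * b) <= K * (sqrt (c * d) + sqrt (e * f)).
Proof.
  intros hK ha hb hc hd he hf ha1 ha2 hb1 hb2.
  set (s := sqrt (c * d) + sqrt (e * f)).
  assert (hs : 0 <= s).
  { pose proof (sqrt_pos (c * d)); pose proof (sqrt_pos (e * f)); unfold s; lra. }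
  assert (hma : a <= K * Rmin (c + f) (d + e)) by (unfold Rmin; destruct Rle_dec; assumption).
  assert (hmb : b <= K * Rmin (c + e) (d + f)) by (unfold Rmin; destruct Rle_dec; assumption).
  pose proof (Rmin_mul_Rmin_le c d e f hc hd he hf) as hmin.
  assert (hab : a * b <= (K * s) ^ 2).
  { apply Rle_trans with (K * Rmin (c + f) (d + e) * (K * Rmin (c + e) (d + f))).
    - apply Rmult_le_compat; assumption.
    - replace ((K * s) ^ 2) with (K ^ 2 * s ^ 2) by ring.
      replace (K * Rmin (c + f) (d + e) * (K * Rmin (c + e) (d + f)))
        with (K ^ 2 * (Rmin (c + f) (d + e) * Rmin (c + e) (d + f))) by ring.
      apply Rmult_le_compat_l; [apply pow2_ge_0 | exact hmin]. }
  rewrite <- (sqrt_pow2 (K * s)) by (apply Rmult_le_pos; assumption).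
  apply sqrt_le_1_alt, hab.
Qed.

Lemma mul_le_of_sqrt_mul_le (K a b x y : R) :
  0 <= a -> 0 <= b -> 0 <= x -> 0 <= y ->
  sqrt (a * b) <= K * (sqrt x + sqrt y) -> a * b <= 2 * K ^ 2 * (x + y).
Proof.
  intros ha hb hx hy hle.
  rewrite <- (pow2_sqrt (a * b)) by (apply Rmult_le_pos; assumption).
  apply Rle_trans with ((K * (sqrt x + sqrt y)) ^ 2).
  - apply pow_incr; split; [apply sqrt_pos | exact hle].
  - replace ((K * (sqrt x + sqrt y)) ^ 2) with (K ^ 2 * (sqrt x + sqrt y) ^ 2) by ring.
    replace (2 * K ^ 2 * (x + y)) with (K ^ 2 * (2 * (x + y))) by ring.
    apply Rmult_le_compat_l; [apply pow2_ge_0 | apply sqr_sqrt_plus_le; assumption].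
Qed.

Theorem lemma3p4 (K : R) (r : nat -> nat -> R)
  (hK : 1 <= K)
  (hnn : forall i j, idx4 i -> idx4 j -> 0 <= r i j)
  (hsym : forall i j, idx4 i -> idx4 j -> r i j = r j i)
  (htri : forall i j k, idx4 i -> idx4 j -> idx4 k ->
            r i j <= K * (r i k + r j k)) :
  sqrt (r 1%nat 2%nat * r 3%nat 4%nat)
    <= K * (sqrt (r 1%nat 3%nat * r 2%nat 4%nat) + sqrt (r 1%nat 4%nat * r 2%nat 3%nat))
  /\ r 1%nat 2%nat * r 3%nat 4%nat
       <= 2 * K ^ 2 * (r 1%nat 3%nat * r 2%nat 4%nat + r 1%nat 4%nat * r 2%nat 3%nat)
  /\ 2 * K ^ 2 * (r 1%nat 3%nat * r 2%nat 4%nat + r 1%nat 4%nat * r 2%nat 3%nat)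
       <= (2 * K) ^ 2 * Rmax (r 1%nat 3%nat * r 2%nat 4%nat) (r 1%nat 4%nat * r 2%nat 3%nat).
Proof.
  assert (i1 : idx4 1) by (unfold idx4; lia).
  assert (i2 : idx4 2) by (unfold idx4; lia).
  assert (i3 : idx4 3) by (unfold idx4; lia).
  assert (i4 : idx4 4) by (unfold idx4; lia).
  assert (hptolemy :
    sqrt (r 1%nat 2%nat * r 3%nat 4%nat)
      <= K * (sqrt (r 1%nat 3%nat * r 2%nat 4%nat) + sqrt (r 1%nat 4%nat * r 2%nat 3%nat))).
  { apply sqrt_mul_le_quasi_ptolemy; try (apply hnn; assumption); try lra.
    - apply (htri 1 2 3)%nat; assumption.
    - rewrite Rplus_comm; apply (htri 1 2 4)%nat; assumption.
    - rewrite (hsym 1 3)%nat, (hsym 1 4)%nat by assumption.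
      apply (htri 3 4 1)%nat; assumption.
    - rewrite (hsym 2 4)%nat, (hsym 2 3)%nat, Rplus_comm by assumption.
      apply (htri 3 4 2)%nat; assumption. }
  split; [exact hptolemy | split].
  - apply mul_le_of_sqrt_mul_le; try apply Rmult_le_pos; try apply hnn; assumption.
  - set (m := Rmax _ _).
    replace ((2 * K) ^ 2 * m) with (2 * K ^ 2 * (2 * m)) by ring.
    apply Rmult_le_compat_l; [pose proof (pow2_ge_0 K); lra | apply Rplus_le_2_Rmax].
Qed.
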